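(* Let $\|\cdot\|$ be a norm on $\mathbb{M}_n$. Then the class of all $M$-norms $\||\cdot\||$ on $\mathbb{M}_n$ with $\||A\||\le\|A\|$ for all $A\in\mathbb{M}_n$ has a maximum element.
   Context: $\mathbb{M}_n$ is the algebra of complex $n\times n$ matrices with identity $I$. A norm $\||\cdot\||$ on $\mathbb{M}_n$ is an $M$-norm if $\left\||\sum_{i=1}^k C_i^*X_iC_i\right\||\le \max_{1\le i\le k}\||X_i\||$ for all $k$, all $X_i\in\mathbb{M}_n$ and all $C_i\in\mathbb{M}_n$ with $\sum_{i=1}^k C_i^*C_i=I$. Inequalities between norms are pointwise. *)

From HB Require Import structures.
From mathcomp Require Import all_boot all_order all_algebra.
From mathcomp Require Import complex.
From mathcomp Require Import reals.
Set Implicit Arguments. Unset Strict Implicit. Unset Printing Implicit Defensive.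
Import Order.TTheory GRing.Theory Num.Theory.
Local Open Scope ring_scope.

Definition adjmx (R : realType) (n : nat) (A : 'M[R[i]]_n) : 'M[R[i]]_n :=
  (map_mx (@conjc R) A)^T.

Definition is_norm (R : realType) (n : nat) (N : 'M[R[i]]_n -> R) : Prop :=
  [/\ (forall A, 0 <= N A),
      (forall A, N A = 0 -> A = 0),
      (forall (c : R[i]) A, N (c *: A) = Normc.normc c * N A)
    & (forall A B, N (A + B) <= N A + N B)].

Definition is_Mnorm (R : realType) (n : nat) (N : 'M[R[i]]_n -> R) : Prop :=
  is_norm N /\
  forall (k : nat) (C X : 'I_k -> 'M[R[i]]_n),
    \sum_(i < k) (adjmx (C i) *m C i) = 1%:M ->
    N (\sum_(i < k) (adjmx (C i) *m X i *m C i)) <= \big[Num.max/0]_(i < k) N (X i).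

From HB Require Import structures.
From mathcomp Require Import all_boot all_order all_algebra.
From mathcomp Require Import complex.
From mathcomp Require Import reals.
From mathcomp Require Import boolp classical_sets topology normedtype derive.
From mathcomp Require Import ring.
Import Order.TTheory GRing.Theory Num.Theory.
Import numFieldNormedType.Exports.
Local Open Scope ring_scope.
Local Open Scope complex_scope.
Set Implicit Arguments. Unset Strict Implicit. Unset Printing Implicit Defensive.

(* The numerical radius w(X) = sup_x |x^* X x| / x^* x is an M-norm, because
   x^* (sum_i C_i^* X_i C_i) x = sum_i (C_i x)^* X_i (C_i x) and
   sum_i |C_i x|^2 = |x|^2 when sum_i C_i^* C_i = I.  All norms on the
   finite-dimensional space M_n are equivalent, so some positive multiple of w
   lies below the given norm.  The M-norms below the given norm thus form a
   nonempty family, bounded above pointwise, and its pointwise supremum is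
   again an M-norm below the given norm: the maximum. *)

Local Notation normc := (@Normc.normc _).

Section ComplexModulus.
Variable R : realType.

Lemma normc_ge0 (z : R[i]) : 0 <= normc z.
Proof. by case: z => a b; rewrite /Normc.normc sqrtr_ge0. Qed.

Lemma normc_gt0 (z : R[i]) : z != 0 -> 0 < normc z.
Proof.
by move=> z0; rewrite lt_def normc_ge0 andbT; apply: contra z0 => /eqP/Normc.eq0_normc ->.
Qed.

Lemma normc_real (r : R) : normc r%:C = `|r|.
Proof. by rewrite /Normc.normc /= expr0n addr0 sqrtr_sqr. Qed.

Lemma normc_le_Re_Im (a b : R) : normc (Complex a b) <= `|a| + `|b|.
Proof.
rewrite /Normc.normc -(ger0_norm (addr_ge0 (normr_ge0 a) (normr_ge0 b))).
rewrite -sqrtr_sqr ler_sqrt ?sqr_ge0 // sqrrD.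
rewrite -[a ^+ 2]real_normK ?num_real // -[b ^+ 2]real_normK ?num_real //.
by rewrite -addrA lerD2l lerDr mulrn_wge0 // mulr_ge0.
Qed.

Lemma normc_conj (z : R[i]) : normc z^* = normc z.
Proof. by case: z => a b; rewrite /Normc.normc /= sqrrN. Qed.

Lemma conjc_mul_normc (z : R[i]) : z^* * z = (normc z ^+ 2)%:C.
Proof.
case: z => a b; rewrite /Normc.normc /= sqr_sqrtr ?addr_ge0 ?sqr_ge0 //.
by apply/eqP; rewrite eq_complex /= !mulNr opprK !expr2 [b * a]mulrC subrr !eqxx.
Qed.

Lemma normc_sum (I : Type) (r : seq I) (P : pred I) (F : I -> R[i]) :
  normc (\sum_(i <- r | P i) F i) <= \sum_(i <- r | P i) normc (F i).
Proof.
elim/big_ind2: _ => [|a b x y ab xy|//]; first by rewrite Normc.normc0.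
exact: le_trans (le_normcD _ _) (lerD ab xy).
Qed.

End ComplexModulus.

Section NormFacts.
Variables (R : realType) (n : nat) (N : 'M[R[i]]_n -> R).
Hypothesis N_norm : is_norm N.

Lemma is_norm0 : N 0 = 0.
Proof. by case: N_norm => _ _ NZ _; rewrite -(scale0r 0) NZ Normc.normc0 mul0r. Qed.

Lemma is_norm_sum (I : Type) (r : seq I) (P : pred I) (F : I -> 'M[R[i]]_n) :
  N (\sum_(i <- r | P i) F i) <= \sum_(i <- r | P i) N (F i).
Proof.
case: N_norm => _ _ _ ND.
elim/big_ind2: _ => [|A B x y Ax By|//]; first by rewrite is_norm0.
exact: le_trans (ND _ _) (lerD Ax By).
Qed.

End NormFacts.

Definition mx_abs_sum (R : realType) (n : nat) (A : 'M[R[i]]_n) : R :=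
  \sum_i \sum_j normc (A i j).

Lemma mx_abs_sum_ge0 (R : realType) (n : nat) (A : 'M[R[i]]_n) : 0 <= mx_abs_sum A.
Proof. by rewrite sumr_ge0 // => i _; rewrite sumr_ge0 // => j _; exact: normc_ge0. Qed.

Section RealCoordinates.
Variables (R : realType) (n : nat).
Local Notation coords := 'rV[R]_(n * (n + n)).

Definition rV_of_mx (A : 'M[R[i]]_n) : coords :=
  mxvec (row_mx (map_mx (@complex.Re R) A) (map_mx (@complex.Im R) A)).

Definition mx_of_rV (v : coords) : 'M[R[i]]_n :=
  \matrix_(i, j) Complex (vec_mx v i (lshift n j)) (vec_mx v i (rshift n j)).

Lemma rV_of_mxK : cancel rV_of_mx mx_of_rV.
Proof.
move=> A; apply/matrixP => i j.
by rewrite mxE mxvecK row_mxEl row_mxEr !mxE; case: (A i j).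
Qed.

Lemma mx_of_rVK : cancel mx_of_rV rV_of_mx.
Proof.
move=> v; rewrite /rV_of_mx -[RHS]vec_mxK -[vec_mx v]hsubmxK.
by congr (mxvec (row_mx _ _)); apply/matrixP => i j; rewrite !mxE.
Qed.

Lemma mx_of_rV0 : mx_of_rV 0 = 0.
Proof. by apply/matrixP => i j; rewrite !mxE. Qed.

Lemma mx_of_rVB u v : mx_of_rV (u - v) = mx_of_rV u - mx_of_rV v.
Proof. by apply/matrixP => i j; rewrite !mxE. Qed.

Lemma mx_of_rVZ (a : R) v : mx_of_rV (a *: v) = a%:C *: mx_of_rV v.
Proof. by apply/matrixP => i j; rewrite !mxE /=; simpc. Qed.

Lemma normc_mx_of_rV_le v i j : normc (mx_of_rV v i j) <= 2 * `|v|.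
Proof.
have coord_le k : `|vec_mx v i k| <= `|v|.
  rewrite mxE [leRHS]/Num.Def.normr /= mx_normrE.
  by apply/bigmax_geP; right; exists (ord0, mxvec_index i k).
rewrite mxE (le_trans (normc_le_Re_Im _ _)) // mulr2n mulrDl mul1r.
exact: lerD.
Qed.

Lemma mx_abs_sum_mx_of_rV_le v : mx_abs_sum (mx_of_rV v) <= (n * n)%:R * (2 * `|v|).
Proof.
rewrite (le_trans (ler_sum _ (fun i _ => ler_sum _ (fun j _ => normc_mx_of_rV_le v i j)))) //.
by rewrite !sumr_const !card_ord -mulrnA [leRHS]mulr_natl.
Qed.

Variable N : 'M[R[i]]_n -> R.
Hypothesis N_norm : is_norm N.

Lemma norm_mx_of_rV_le : exists2 L, 0 <= L & forall v, N (mx_of_rV v) <= L * `|v|.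
Proof.
case: (N_norm) => N_ge0 _ NZ _.
exists (2 * \sum_i \sum_j N (delta_mx i j)) => [|v].
  by rewrite mulr_ge0 // sumr_ge0 // => i _; rewrite sumr_ge0.
rewrite {1}[mx_of_rV v]matrix_sum_delta (le_trans (is_norm_sum N_norm _ _ _)) //.
rewrite mulrAC mulr_sumr ler_sum // => i _.
rewrite mulr_sumr (le_trans (is_norm_sum N_norm _ _ _)) // ler_sum // => j _.
by rewrite NZ ler_wpM2r // normc_mx_of_rV_le.
Qed.

Lemma continuous_norm_mx_of_rV : continuous (fun v => N (mx_of_rV v)).
Proof.
case: (N_norm) => _ _ _ ND; have [L L0 NL] := norm_mx_of_rV_le.
have lip u v : N (mx_of_rV u) - N (mx_of_rV v) <= L * `|u - v|.
  have -> : mx_of_rV u = mx_of_rV v + mx_of_rV (u - v) by rewrite mx_of_rVB addrC subrK.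
  by rewrite lerBlDl (le_trans (ND _ _)) // lerD2l NL.
move=> v A /= /(nbhs_ballP (N (mx_of_rV v))) [e e0 eA].
have L1 : 0 < L + 1 by rewrite ltr_wpDl.
apply/nbhs_ballP; exists (e / (L + 1)) => [|u]; first by rewrite /= divr_gt0.
rewrite -!ball_normE /= ltr_pdivlMr // => vu; apply: eA; rewrite -ball_normE /=.
rewrite (le_lt_trans _ vu) // (@le_trans _ _ (L * `|v - u|)) //.
  by rewrite ler_norml lip andbT lerNl opprB distrC lip.
by rewrite mulrC ler_wpM2l // lerDl.
Qed.

(* m is the minimum of N on the compact unit sphere of the coordinate space. *)
Lemma norm_mx_of_rV_ge : exists2 m, 0 < m & forall v, m * `|v| <= N (mx_of_rV v).
Proof.
case: (N_norm) => N_ge0 N_eq0 NZ _.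
pose S := [set v : coords | `|v| = 1]%classic.
have normalize v : v != 0 -> S (`|v|^-1 *: v).
  by move=> v0; rewrite /S /= normrZ normfV normr_id mulVf // normr_eq0.
have [[w Sw]|S0] := pselect (S !=set0)%classic; last first.
  exists 1 => // v; case: (eqVneq v 0) => [->|v0]; first by rewrite normr0 mulr0.
  by case: S0; exists (`|v|^-1 *: v); exact: normalize.
have S_compact : compact S.
  apply: bounded_closed_compact; first by exists 1; split => // M M1 v /= ->; exact: ltW.
  apply: (@preimage_closed _ _ (fun v : coords => `|v|) (fun x : R => x = 1)).
    by move=> x _; exact: norm_continuous.
  exact: closed_eq.
have [c /[1!inE] Sc cmin] := compact_EVT_min (ex_intro _ w Sw) S_compact
  (continuous_subspaceT continuous_norm_mx_of_rV).
have Nc0 : 0 < N (mx_of_rV c).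
  rewrite lt_def N_ge0 andbT; apply: contraPN Sc => /eqP/N_eq0.
  rewrite -mx_of_rV0 => /(can_inj mx_of_rVK) ->; rewrite /S /= normr0.
  by move/esym/eqP; rewrite oner_eq0.
exists (N (mx_of_rV c)) => // v; case: (eqVneq v 0) => [->|v0].
  by rewrite normr0 mulr0 N_ge0.
have := cmin _ (mem_set (normalize v v0)).
rewrite mx_of_rVZ NZ normc_real ger0_norm ?invr_ge0 // => Nc_le.
by rewrite -ler_pdivlMr ?normr_gt0 // mulrC.
Qed.

End RealCoordinates.

Lemma is_norm_dominates_abs_sum (R : realType) (n : nat) (N : 'M[R[i]]_n -> R) :
  is_norm N -> exists2 c, 0 < c & forall A, mx_abs_sum A <= c * N A.
Proof.
move=> N_norm; have [m m0 Nm] := norm_mx_of_rV_ge N_norm.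
pose k : R := (n * n)%:R * 2 + 1. (* the + 1 keeps k positive when n = 0 *)
have k0 : 0 < k by rewrite ltr_wpDl // mulr_ge0.
exists (k / m) => [|A]; first by rewrite divr_gt0.
rewrite -[A]rV_of_mxK; set v := rV_of_mx A.
rewrite (le_trans (mx_abs_sum_mx_of_rV_le v)) // mulrA.
rewrite (@le_trans _ _ (k * `|v|)) ?ler_wpM2r ?lerDl //.
rewrite -{1}(divfK (lt0r_neq0 m0) k) -[k / m * m * _]mulrA.
by rewrite ler_pM2l ?divr_gt0.
Qed.

Section NumericalRadius.
Variables (R : realType) (n : nat).
Local Notation C := R[i].
Implicit Types (x y : 'cV[C]_n) (X Y : 'M[C]_n).

Definition adjv (x : 'cV[C]_n) : 'rV[C]_n := (map_mx (@conjc R) x)^T.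
Definition sform (X : 'M[C]_n) (x y : 'cV[C]_n) : C := (adjv x *m X *m y) 0 0.
Definition qform (X : 'M[C]_n) (x : 'cV[C]_n) : C := sform X x x.
Definition vnorm2 (x : 'cV[C]_n) : R := \sum_k normc (x k 0) ^+ 2.

Lemma adjvD x y : adjv (x + y) = adjv x + adjv y.
Proof. by apply/matrixP => a b; rewrite !mxE rmorphD. Qed.

Lemma adjvZ (a : C) x : adjv (a *: x) = a^* *: adjv x.
Proof. by apply/matrixP => a' b; rewrite !mxE rmorphM. Qed.

Lemma adjv_mulmx (A : 'M[C]_n) x : adjv (A *m x) = adjv x *m adjmx A.
Proof. by rewrite /adjv /adjmx map_mxM trmx_mul. Qed.

Lemma vnorm2_ge0 x : 0 <= vnorm2 x.
Proof. by rewrite sumr_ge0 // => k _; rewrite sqr_ge0. Qed.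

Lemma adjv_mulmx_self x : (adjv x *m x) 0 0 = (vnorm2 x)%:C.
Proof. by rewrite mxE /vnorm2 raddf_sum; apply: eq_bigr => k _; rewrite !mxE conjc_mul_normc. Qed.

Lemma normc_mul_le_vnorm2 x i j : normc (x i 0) * normc (x j 0) <= vnorm2 x.
Proof.
have sq_le k : normc (x k 0) ^+ 2 <= vnorm2 x.
  by rewrite /vnorm2 (bigD1 k) //= lerDl sumr_ge0 // => l _; rewrite sqr_ge0.
have [ij|ji] := leP (normc (x i 0)) (normc (x j 0)).
  by apply: le_trans (sq_le j); rewrite expr2 ler_wpM2r ?normc_ge0.
by apply: le_trans (sq_le i); rewrite expr2 ler_wpM2l ?normc_ge0 ?ltW.
Qed.

Lemma normc_qform_le_abs_sum X x : normc (qform X x) <= mx_abs_sum X * vnorm2 x.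
Proof.
rewrite /qform /sform mxE (le_trans (normc_sum _ _ _)) // /mx_abs_sum.
rewrite exchange_big mulr_suml ler_sum // => j _.
rewrite mxE Normc.normcM mulr_suml.
rewrite (le_trans (ler_wpM2r (normc_ge0 _) (normc_sum _ _ _))) // mulr_suml ler_sum // => i _.
rewrite Normc.normcM !mxE normc_conj mulrAC mulrC.
by rewrite ler_wpM2l ?normc_ge0 ?normc_mul_le_vnorm2.
Qed.

Definition numrad_ratios (X : 'M[C]_n) := [set normc (qform X x) / vnorm2 x | x in setT]%classic.
Definition numrad (X : 'M[C]_n) : R := sup (numrad_ratios X).

Lemma numrad_ratios_le X B : (forall x, normc (qform X x) <= B * vnorm2 x) ->
  0 <= B -> ubound (numrad_ratios X) B.
Proof.
move=> XB B0 _ [x _ <-]; have [->|x0] := eqVneq (vnorm2 x) 0.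
  by rewrite invr0 mulr0.
by rewrite ler_pdivrMr // lt_def x0 vnorm2_ge0.
Qed.

Lemma numrad_ratios0 X : numrad_ratios X 0.
Proof. by exists 0 => //; rewrite /qform /sform mulmx0 mxE Normc.normc0 mul0r. Qed.

Lemma has_sup_numrad_ratios X : has_sup (numrad_ratios X).
Proof.
split; first by exists 0; exact: numrad_ratios0.
by exists (mx_abs_sum X); apply: numrad_ratios_le (normc_qform_le_abs_sum X) (mx_abs_sum_ge0 X).
Qed.

Lemma numrad_ge0 X : 0 <= numrad X.
Proof. exact: (sup_upper_bound (has_sup_numrad_ratios X) (numrad_ratios0 X)). Qed.

Lemma numrad_le X B : (forall x, normc (qform X x) <= B * vnorm2 x) -> 0 <= B ->
  numrad X <= B.
Proof. by move=> XB B0; apply: ge_sup; [exists 0; exact: numrad_ratios0 | exact: numrad_ratios_le]. Qed.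

Lemma numrad_le_abs_sum X : numrad X <= mx_abs_sum X.
Proof. exact: numrad_le (normc_qform_le_abs_sum X) (mx_abs_sum_ge0 X). Qed.

Lemma normc_qform_le X x : normc (qform X x) <= numrad X * vnorm2 x.
Proof.
have [x0|x0] := eqVneq (vnorm2 x) 0.
  by have := normc_qform_le_abs_sum X x; rewrite x0 !mulr0.
rewrite -ler_pdivrMr ?lt_def ?x0 ?vnorm2_ge0 //.
by apply: (sup_upper_bound (has_sup_numrad_ratios X)); exists x.
Qed.

Lemma qformZ X (c : C) x : qform (c *: X) x = c * qform X x.
Proof. by rewrite /qform /sform -scalemxAr -scalemxAl mxE. Qed.

Lemma qformD X Y x : qform (X + Y) x = qform X x + qform Y x.
Proof. by rewrite /qform /sform mulmxDr mulmxDl mxE. Qed.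

Lemma numradZ (c : C) X : numrad (c *: X) = normc c * numrad X.
Proof.
apply/le_anti/andP; split.
  apply: numrad_le; last by rewrite mulr_ge0 ?normc_ge0 ?numrad_ge0.
  by move=> x; rewrite qformZ Normc.normcM -mulrA ler_wpM2l ?normc_ge0 ?normc_qform_le.
have [->|c0] := eqVneq c 0; first by rewrite Normc.normc0 mul0r numrad_ge0.
rewrite -ler_pdivlMl ?normc_gt0 //; apply: numrad_le => [x|].
  rewrite -{1}(scalerK c0 X) qformZ Normc.normcM Normc.normcV -mulrA.
  by rewrite ler_wpM2l ?invr_ge0 ?normc_ge0 ?normc_qform_le.
by rewrite mulr_ge0 ?invr_ge0 ?normc_ge0 ?numrad_ge0.
Qed.

Lemma numradD X Y : numrad (X + Y) <= numrad X + numrad Y.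
Proof.
apply: numrad_le => [x|]; last by rewrite addr_ge0 ?numrad_ge0.
rewrite qformD mulrDl (le_trans (le_normcD _ _)) //.
by rewrite lerD ?normc_qform_le.
Qed.

Lemma qform_addv X x y :
  qform X (x + y) = qform X x + qform X y + sform X x y + sform X y x.
Proof. by rewrite /qform /sform adjvD mulmxDl mulmxDr !mulmxDl !mxE; ring. Qed.

Lemma sformZr X x y (a : C) : sform X x (a *: y) = a * sform X x y.
Proof. by rewrite /sform -scalemxAr mxE. Qed.

Lemma sformZl X x y (a : C) : sform X (a *: x) y = a^* * sform X x y.
Proof. by rewrite /sform adjvZ -!scalemxAl mxE. Qed.

Lemma sform_delta X i j : sform X (delta_mx i 0) (delta_mx j 0) = X i j.
Proof.
rewrite /sform /adjv (_ : map_mx _ _ = delta_mx i 0); last first.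
  by apply/matrixP => a b; rewrite !mxE conjc_nat.
by rewrite trmx_delta -rowE -colE !mxE.
Qed.

(* Polarization: the form vanishes on e_i + e_j and on e_i + 'i e_j, which
   forces X i j + X j i = 0 and X i j - X j i = 0. *)
Lemma numrad_eq0 X : numrad X = 0 -> X = 0.
Proof.
move=> X0.
have q0 x : qform X x = 0.
  apply: Normc.eq0_normc; apply/le_anti; rewrite normc_ge0 andbT.
  by have := normc_qform_le X x; rewrite X0 mul0r.
apply/matrixP => i j; rewrite mxE.
have := q0 (delta_mx i 0 + delta_mx j 0).
rewrite qform_addv !q0 !sform_delta !add0r => /eqP; rewrite addr_eq0 => /eqP Xji.
have := q0 (delta_mx i 0 + 'i *: delta_mx j 0).
rewrite qform_addv !q0 sformZr sformZl !sform_delta !add0r Xji.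
rewrite [X in _ + X * _ = 0](_ : _ = - 'i); last first.
  by apply/eqP; rewrite eq_complex /= oppr0 !eqxx.
rewrite mulrN mulNr -opprD -mulr2n => /eqP.
rewrite oppr_eq0 mulrn_eq0 /= mulf_eq0 => /orP [|/eqP ->]; last exact: oppr0.
by rewrite eq_complex /= oner_eq0 andbF.
Qed.

Lemma is_norm_numrad : is_norm numrad.
Proof. by split; [exact: numrad_ge0 | exact: numrad_eq0 | exact: numradZ | exact: numradD]. Qed.

Lemma is_Mnorm_numrad : is_Mnorm numrad.
Proof.
split=> [|k Cs Xs sumCs]; first exact: is_norm_numrad.
apply: numrad_le => [x|]; last exact: bigmax_ge_id.
have qform_sum : qform (\sum_(i < k) (adjmx (Cs i) *m Xs i *m Cs i)) x =
    \sum_(i < k) qform (Xs i) (Cs i *m x).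
  rewrite /qform /sform mulmx_sumr mulmx_suml summxE; apply: eq_bigr => i _.
  by rewrite adjv_mulmx !mulmxA.
have vnorm2_sum : \sum_(i < k) vnorm2 (Cs i *m x) = vnorm2 x.
  apply: (@complexI R); rewrite raddf_sum -adjv_mulmx_self -(mulmx1 (adjv x)) -sumCs.
  rewrite mulmx_sumr mulmx_suml summxE; apply: eq_bigr => i _.
  by rewrite !mulmxA -(mulmxA _ (Cs i)) -adjv_mulmx adjv_mulmx_self.
rewrite qform_sum -vnorm2_sum mulr_sumr (le_trans (normc_sum _ _ _)) //.
apply: ler_sum => i _; rewrite (le_trans (normc_qform_le _ _)) //.
by rewrite ler_wpM2r ?vnorm2_ge0 ?le_bigmax.
Qed.

End NumericalRadius.

Lemma is_Mnorm_scale (R : realType) (n : nat) (d : R) (N : 'M[R[i]]_n -> R) :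
  0 < d -> is_Mnorm N -> is_Mnorm (fun A => d * N A).
Proof.
move=> d0 [[N_ge0 N_eq0 NZ ND] NM]; split; first split.
- by move=> A; rewrite mulr_ge0 ?N_ge0 ?ltW.
- by move=> A /eqP; rewrite mulf_eq0 gt_eqF //= => /eqP /N_eq0.
- by move=> c A; rewrite NZ mulrCA.
- by move=> A B; rewrite -mulrDr ler_pM2l ?ND.
- move=> k Cs Xs sumCs; rewrite -(big_endo _ (fun a b => maxr_pMr a b (ltW d0)) (mulr0 d)).
  by rewrite ler_pM2l // NM.
Qed.

Section PointwiseSup.
Variables (R : realType) (n : nat) (F : set ('M[R[i]]_n -> R)) (B : 'M[R[i]]_n -> R).
Hypotheses (F_Mnorm : forall N, F N -> is_Mnorm N) (F_le : forall N A, F N -> N A <= B A).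
Hypothesis F_neq0 : (F !=set0)%classic.

Definition pointwise_sup (A : 'M[R[i]]_n) : R := sup [set N A | N in F]%classic.

Lemma le_pointwise_sup N A : F N -> N A <= pointwise_sup A.
Proof.
move=> FN; apply: (sup_upper_bound _ (ex_intro2 _ _ N FN erefl)).
by split; [exists (N A), N | exists (B A) => _ [N' FN' <-]; exact: F_le].
Qed.

Lemma pointwise_sup_le A b : (forall N, F N -> N A <= b) -> pointwise_sup A <= b.
Proof.
move=> Fb; have [N FN] := F_neq0.
by apply: ge_sup; [exists (N A), N | move=> _ [N' FN' <-]; exact: Fb].
Qed.

Lemma pointwise_sup_ge0 A : 0 <= pointwise_sup A.
Proof.
have [N FN] := F_neq0; have [[N_ge0 _ _ _] _] := F_Mnorm FN.
exact: le_trans (N_ge0 A) (le_pointwise_sup A FN).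
Qed.

Lemma pointwise_supZ_le (c : R[i]) A : pointwise_sup (c *: A) <= normc c * pointwise_sup A.
Proof.
apply: pointwise_sup_le => N FN; have [[_ _ NZ _] _] := F_Mnorm FN.
by rewrite NZ ler_wpM2l ?normc_ge0 ?le_pointwise_sup.
Qed.

Lemma is_Mnorm_pointwise_sup : is_Mnorm pointwise_sup.
Proof.
split; first split.
- exact: pointwise_sup_ge0.
- move=> A A0; have [N FN] := F_neq0; have [[N_ge0 N_eq0 _ _] _] := F_Mnorm FN.
  by apply: N_eq0; apply/le_anti; rewrite N_ge0 -A0 le_pointwise_sup.
- move=> c A; apply/le_anti; rewrite pointwise_supZ_le /=.
  have [->|c0] := eqVneq c 0; first by rewrite Normc.normc0 mul0r pointwise_sup_ge0.
  rewrite -ler_pdivlMl ?normc_gt0 // -Normc.normcV.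
  by rewrite -{1}(scalerK c0 A) pointwise_supZ_le.
- move=> A A'; apply: pointwise_sup_le => N FN; have [[_ _ _ ND] _] := F_Mnorm FN.
  by rewrite (le_trans (ND A A')) // lerD ?le_pointwise_sup.
- move=> k Cs Xs sumCs; apply: pointwise_sup_le => N FN; have [_ NM] := F_Mnorm FN.
  rewrite (le_trans (NM k Cs Xs sumCs)) // le_bigmax2 // => i _.
  exact: le_pointwise_sup.
Qed.

End PointwiseSup.

Theorem corollary3p2 (R : realType) (n : nat) (nrm : 'M[R[i]]_n -> R) :
  is_norm nrm ->
  exists N0 : 'M[R[i]]_n -> R,
    [/\ is_Mnorm N0,
        (forall A, N0 A <= nrm A)
      & (forall N : 'M[R[i]]_n -> R,
           is_Mnorm N -> (forall A, N A <= nrm A) -> forall A, N A <= N0 A)].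
Proof.
move=> nrm_norm; have [c c0 abs_sum_le] := is_norm_dominates_abs_sum nrm_norm.
pose below := [set N | is_Mnorm N /\ forall A, N A <= nrm A]%classic.
have below_numrad : below (fun A => c^-1 * numrad A).
  split=> [|A]; first by apply: is_Mnorm_scale (is_Mnorm_numrad R n); rewrite invr_gt0.
  by rewrite ler_pdivrMl // (le_trans (numrad_le_abs_sum A)) ?abs_sum_le.
have below_neq0 : (below !=set0)%classic by exists (fun A => c^-1 * numrad A).
have below_Mnorm N : below N -> is_Mnorm N by case.
have below_le N A : below N -> N A <= nrm A by case=> _; apply.
exists (pointwise_sup below); split.
- exact: is_Mnorm_pointwise_sup below_Mnorm below_le below_neq0.
- by move=> A; apply: (pointwise_sup_le below_neq0) => N [_]; apply.
- by move=> N NM Nle A; apply: (le_pointwise_sup below_le).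
Qed.
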